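(* Let $(x^*,y^* )$ be an optimal solution of the LP relaxation of forest cover, $G^*$ the subgraph with vertex set $\{i: x^*_i>0\}$ and edge set $\{(i,j): y^*_{ij}>0\}$, and $C=(V_C,E_C)$ a connected component of $G^*$ with at least one edge. Let $e_1,\dots,e_{|E_C|}$ be the edges of $C$ in the order (nondecreasing weight) in which Kruskal's algorithm considers them when computing the minimum spanning tree $M$ of $C$, and let $T$ be the tree obtained from $M$ by deleting every degree-one vertex $i$ of $M$ with $x^*_i<1/2$ together with its incident edge. For $1\le r\le|E_C|$ let $H_r$ be the graph with edge set $E_{H_r}=\{e_1,\dots,e_r\}$ and vertex set $V_{H_r}$ the endpoints of these edges, with connected components $S^1_r,\dots,S^k_r$, and let $T^f_r$ be the graph whose edges $E_{T^f_r}$ are the edges of $S^f_r$ belonging to $T$ and whose vertices $V_{T^f_r}$ are their endpoints. Then $$\sum_{i\in V_{H_r}}x^*_i-\sum_{(i,j)\in E_{H_r}}y^*_{ij}\;\ge\;\sum_{f=1}^k\big(|V_{T^f_r}|-|E_{T^f_r}|\big).$$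
   Context: Graph $G=(V,E)$ with edge weights $w:E\to[0,1]$. For $S\subseteq V$, $E(S)$ denotes the edges with both endpoints in $S$. The LP relaxation of forest cover: minimize $\sum_{i\in V}x_i-\sum_{(i,j)\in E}y_{ij}(1-w_{ij})$ subject to $x_i+x_j\ge1$ and $x_i\ge y_{ij}$, $x_j\ge y_{ij}$ for all $(i,j)\in E$; $\sum_{i\in S}x_i-\sum_{(i,j)\in E(S)}y_{ij}\ge1$ for all $S\subseteq V$ with $E(S)\ne\emptyset$; $0\le x,y\le1$. *)

From HB Require Import structures.
From mathcomp Require Import all_boot all_order all_algebra.
From mathcomp Require Import reals.
Set Implicit Arguments. Unset Strict Implicit. Unset Printing Implicit Defensive.
Import Order.TTheory GRing.Theory Num.Theory.
Local Open Scope ring_scope.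

(* Graphs: vertex type V (finType); an edge is a 2-element vertex set {i,j};
   an edge set is F : {set {set V}}. *)

Section Defs.
Variable V : finType.

Definition simple_graph (E : {set {set V}}) : Prop :=
  forall e, e \in E -> #|e| = 2%N.

Definition adj (F : {set {set V}}) : rel V :=
  fun u v => (u != v) && ([set u; v] \in F).

Definition verts (F : {set {set V}}) : {set V} := \bigcup_(e in F) e.

Definition induced (E : {set {set V}}) (S : {set V}) : {set {set V}} :=
  [set e in E | e \subset S].

Variable R : realType.

Definition lp_feasible (E : {set {set V}}) (x : V -> R) (y : {set V} -> R) : Prop :=
  [/\ (forall i j, i != j -> [set i; j] \in E ->
         [/\ 1 <= x i + x j, y [set i; j] <= x i & y [set i; j] <= x j]),
      (forall S : {set V}, induced E S != set0 ->
         1 <= \sum_(i in S) x i - \sum_(e in induced E S) y e),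
      (forall i, 0 <= x i <= 1) &
      (forall e, e \in E -> 0 <= y e <= 1)].

Definition lp_obj (E : {set {set V}}) (w : {set V} -> R)
  (x : V -> R) (y : {set V} -> R) : R :=
  \sum_i x i - \sum_(e in E) y e * (1 - w e).

Definition lp_optimal E w x y : Prop :=
  lp_feasible E x y /\
  forall x' y', lp_feasible E x' y' -> lp_obj E w x y <= lp_obj E w x' y'.

Definition Gstar_verts (x : V -> R) : {set V} := [set i | 0 < x i].
Definition Gstar_edges (E : {set {set V}}) (y : {set V} -> R) : {set {set V}} :=
  [set e in E | 0 < y e].

Definition is_component (Es : {set {set V}}) (Vs VC : {set V}) : Prop :=
  exists2 u, u \in Vs & VC = [set v in Vs | connect (adj Es) u v].

Definition kruskal (s : seq {set V}) : {set {set V}} :=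
  foldl (fun (F : {set {set V}}) (e : {set V}) =>
    if [forall u in e, forall v in e, connect (adj F) u v] then F else e |: F)
    set0 s.

Definition degree (F : {set {set V}}) (i : V) : nat := #|[set e in F | i \in e]|.

(* T: delete from M every degree-one vertex i (degree in M) with x i < 1/2,
   together with its incident edge *)
Definition prune (x : V -> R) (M : {set {set V}}) : {set {set V}} :=
  [set e in M | [forall i in e, ~~ ((degree M i == 1%N) && (x i < 2^-1))]].

Definition components (F : {set {set V}}) : {set {set V}} :=
  [set [set v in verts F | connect (adj F) u v] | u in verts F].

Definition tree_part (T F : {set {set V}}) (S : {set V}) : {set {set V}} :=
  [set e in F | (e \subset S) && (e \in T)].

End Defs.

From HB Require Import structures.
From mathcomp Require Import all_boot all_order all_algebra.
From mathcomp Require Import reals zify lra.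
Import Order.TTheory GRing.Theory Num.Theory.
Set Implicit Arguments. Unset Strict Implicit. Unset Printing Implicit Defensive.

(* Split both sides of the inequality over the connected components S of H_r.
   By the covering constraint of the LP for S and y >= 0, each right-hand
   summand is at least 1.  On the left, the forest Kruskal has built after the
   first r edges spans every component S, so its part inside S has at most one
   vertex more than edges; its edges lying in T are those surviving the
   pruning, and every pruned edge takes its degree-one endpoint with it, so
   the excess stays at most 1.  Only feasibility of (x, y) is used. *)

Section Graphs.
Variable V : finType.
Implicit Types (F G M Q T : {set {set V}}) (e f : {set V}) (S X : {set V}) (u v a b : V).

Lemma adj_sym F : symmetric (adj F).
Proof. by move=> u v; rewrite /adj eq_sym setUC. Qed.

Lemma connect_adj_sym F : connect_sym (adj F).
Proof. exact/sym_connect_sym/adj_sym. Qed.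

Lemma connect_adj_equiv F : equivalence_rel (connect (adj F)).
Proof.
apply/equivalence_relP; split; first exact: connect0.
exact: sym_left_transitive (connect_adj_sym F) (@connect_trans _ _).
Qed.

Lemma connect_adj_subset F G : F \subset G ->
  subrel (connect (adj F)) (connect (adj G)).
Proof.
move=> sFG; apply: connect_sub => u v /andP [uv uvF]; apply: connect1.
by rewrite /adj uv (subsetP sFG).
Qed.

Lemma connect_edge F f u v : f \in F -> #|f| = 2 -> u \in f -> v \in f ->
  connect (adj F) u v.
Proof.
move=> fF f2 uf vf; have [->|uv] := eqVneq u v; first exact: connect0.
apply: connect1; rewrite /adj uv; suff -> : [set u; v] = f by [].
by apply/eqP; rewrite eqEcard subUset !sub1set uf vf cards2 uv f2.
Qed.

Lemma connect_closed (r : rel V) X u v : u \in X ->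
  (forall a b, a \in X -> r a b -> b \in X) -> connect r u v -> v \in X.
Proof.
move=> uX clX /connectP [p + ->]; elim: p u uX => //= c p IHp u uX /andP [ruc].
exact/IHp/(clX _ _ uX ruc).
Qed.

Lemma components_partition F : partition (components F) (verts F).
Proof. by apply: equivalence_partitionP => u v w _ _ _; apply: connect_adj_equiv. Qed.

Lemma sum_verts_components (R : nmodType) F (x : V -> R) :
  (\sum_(i in verts F) x i = \sum_(S in components F) \sum_(i in S) x i)%R.
Proof. exact/set_partition_big/components_partition. Qed.

Lemma mem_edge_verts F f v : f \in F -> v \in f -> v \in verts F.
Proof. by move=> fF vf; apply/bigcupP; exists f. Qed.

Lemma edge_in_components F f v S : simple_graph F -> f \in F -> v \in f ->
  (S \in components F) && (f \subset S) = (S == pblock (components F) v).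
Proof.
move=> sF fF vf; have /and3P [/eqP coverP tiP _] := components_partition F.
have vV := mem_edge_verts fF vf.
apply/andP/eqP => [[SP fS]|->]; first by rewrite (def_pblock tiP SP (subsetP fS v vf)).
split; first by rewrite pblock_mem ?coverP.
apply/subsetP => u uf; rewrite pblock_equivalence_partition ?(mem_edge_verts fF uf) //.
  exact: connect_edge (sF f fF) vf uf.
by move=> ? ? ? _ _ _; apply: connect_adj_equiv.
Qed.

Lemma sum_edges_components (R : nmodType) F (y : {set V} -> R) : simple_graph F ->
  (\sum_(f in F) y f = \sum_(S in components F) \sum_(f in induced F S) y f)%R.
Proof.
move=> sF; rewrite (exchange_big_dep (mem F)) /=; last by move=> S f _; rewrite inE => /andP [].
apply: eq_bigr => f fF; have /card_gt0P [v vf] : 0 < #|f| by rewrite sF.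
rewrite (big_pred1 (pblock (components F) v)) // => S /=.
by rewrite inE fF -(edge_in_components S sF fF vf).
Qed.

Lemma induced_components_neq0 F S : simple_graph F -> S \in components F ->
  induced F S != set0.
Proof.
move=> sF /imsetP [u /bigcupP [f fF uf] ->]; apply/set0Pn; exists f.
rewrite inE fF; apply/subsetP => v vf; rewrite inE (mem_edge_verts fF vf).
exact: connect_edge (sF f fF) uf vf.
Qed.

Definition component F u := [set v | connect (adj F) u v].

(* The only consequence of acyclicity that the argument needs. *)
Definition forestlike F := forall u,
  #|component F u| <= #|induced F (component F u)|.+1.

Lemma forestlike0 : forestlike set0.
Proof.
move=> u; suff -> : component set0 u = [set u] by rewrite cards1.
apply/setP => v; rewrite !inE; apply/idP/eqP => [|->]; last exact: connect0.
have := @connect_closed (adj set0) [set u] u v; rewrite !inE eqxx => closed_u.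
by move=> c; apply/eqP/closed_u => // ? ? _; rewrite /adj in_set0 andbF.
Qed.

Lemma adj_setU1 F e v w : adj (e |: F) v w -> adj F v w \/ (v \in e /\ w \in e).
Proof.
case/andP=> vw /setU1P [evw|vwF]; last by left; rewrite /adj vw vwF.
by right; rewrite -evw !inE !eqxx orbT.
Qed.

Section AddBridge.
Variables (F : {set {set V}}) (a b : V).
Hypotheses (neq_ab : a != b) (sep_ab : ~~ connect (adj F) a b).
Hypothesis set0_notin : set0 \notin F.
Let F' := [set a; b] |: F.
Let CA := component F a.
Let CB := component F b.
Let B := CA :|: CB.
Let IA := induced F CA.
Let IB := induced F CB.

Lemma component_bridge u : u \in B -> component F' u = B.
Proof.
have FF' : F \subset F' by apply: subsetUr.
have adj_ab : adj F' a b by rewrite /adj neq_ab setU11.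
have closedB v w : v \in B -> adj F' v w -> w \in B.
  move=> vB /adj_setU1 [vw|[_ /set2P [->|->]]]; rewrite !inE ?connect0 ?orbT //.
  by case/setUP: vB; rewrite inE => c; rewrite (connect_trans c (connect1 vw)) ?orbT.
move=> uB; apply/eqP; rewrite eqEsubset; apply/andP; split.
  by apply/subsetP => v; rewrite inE; apply: connect_closed uB closedB.
have [ua ub] : connect (adj F') u a /\ connect (adj F') u b.
  have ab := connect1 adj_ab; have ba : connect (adj F') b a by rewrite connect_adj_sym.
  case/setUP: uB; rewrite inE => /(connect_adj_subset FF'); rewrite connect_adj_sym => c.
    by split; last exact: connect_trans c ab.
  by split; first exact: connect_trans c ba.
apply/subsetP => v; rewrite !inE => /orP [] /(connect_adj_subset FF') c.
  exact: connect_trans ua c.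
exact: connect_trans ub c.
Qed.

Lemma component_off_bridge u : u \notin B -> component F' u = component F u.
Proof.
move=> uB; apply/eqP; rewrite eqEsubset; apply/andP; split; apply/subsetP => v.
  rewrite [v \in component F' u]inE; apply: connect_closed; first by rewrite inE connect0.
  move=> v1 w; rewrite !inE => uv1 /adj_setU1 [vw|[/set2P abv1 _]].
    exact: connect_trans uv1 (connect1 vw).
  by move: uB; rewrite !inE !(connect_adj_sym F _ u); case: abv1 => <-; rewrite uv1 ?orbT.
by rewrite !inE; apply: connect_adj_subset; apply: subsetUr.
Qed.

Lemma card_induced_bridge : (#|IA| + #|IB|).+1 <= #|induced F' B|.
Proof.
have disjAB : [disjoint IA & IB].
  rewrite -setI_eq0; apply/eqP/setP => f; rewrite !inE.
  apply/negbTE/andP => -[/andP [fF fA] /andP [_ fB]].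
  have /set0Pn [v vf] : f != set0 by apply: contraNneq set0_notin => <-.
  move: (subsetP fA v vf) (subsetP fB v vf); rewrite !inE => av bv.
  by move: sep_ab; rewrite (connect_trans av _) // connect_adj_sym.
have ab_notin : [set a; b] \notin IA :|: IB.
  rewrite !inE negb_or !negb_and; apply/andP; split; apply/orP; right; apply/subsetPn.
    by exists b; rewrite !inE ?eqxx ?orbT.
  by exists a; rewrite !inE ?eqxx // connect_adj_sym.
have sub : [set a; b] |: (IA :|: IB) \subset induced F' B.
  apply/subsetP => f; rewrite !inE => /or3P [/eqP ->| /andP [fF fA] | /andP [fF fB]].
  - by rewrite eqxx /=; apply/subsetP => v /set2P [] ->; rewrite !inE connect0 ?orbT.
  - by rewrite fF orbT /=; apply: subset_trans fA (subsetUl _ _).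
  - by rewrite fF orbT /=; apply: subset_trans fB (subsetUr _ _).
apply: leq_trans (subset_leq_card sub).
by have := (leq_card_setU IA IB).2; rewrite disjAB cardsU1 ab_notin => /eqP ->.
Qed.

Lemma forestlike_bridge : forestlike F -> forestlike F'.
Proof.
move=> forestF u; have [uB|uB] := boolP (u \in B).
  rewrite component_bridge //; apply: leq_trans (leq_card_setU CA CB) _.
  have := card_induced_bridge; rewrite /IA /IB /CA /CB.
  have := forestF a; have := forestF b; lia.
rewrite component_off_bridge //; apply: leq_trans (forestF u) _.
rewrite ltnS subset_leq_card //; apply/subsetP => f; rewrite !inE.
by case/andP => fF ->; rewrite fF orbT.
Qed.

End AddBridge.

Definition kruskal_step F e :=
  if [forall u in e, forall v in e, connect (adj F) u v] then F else e |: F.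

Lemma kruskal_step_sub F e : kruskal_step F e \subset e |: F.
Proof. by rewrite /kruskal_step; case: ifP => _; [apply: subsetUr|]. Qed.

Lemma kruskal_step_mono F e : F \subset kruskal_step F e.
Proof. by rewrite /kruskal_step; case: ifP => _; [|apply: subsetUr]. Qed.

Lemma connect_kruskal_step F e u v : #|e| = 2 -> u \in e -> v \in e ->
  connect (adj (kruskal_step F e)) u v.
Proof.
move=> e2 ue ve; rewrite /kruskal_step; case: ifP => [/forallP/(_ u)|_].
  by rewrite ue => /forallP/(_ v); rewrite ve.
by apply: connect_edge e2 ue ve; apply: setU11.
Qed.

Lemma forestlike_kruskal_step F e : #|e| = 2 -> set0 \notin F ->
  forestlike F -> forestlike (kruskal_step F e).
Proof.
move=> /eqP/cards2P [a [b [ab ->]]] set0_notin forestF.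
rewrite /kruskal_step; case: ifPn => // /forallPn [u].
rewrite negb_imply => /andP [/set2P hu /forallPn [v]].
rewrite negb_imply => /andP [/set2P hv not_uv].
apply: forestlike_bridge => //; apply: contra not_uv => c_ab.
by case: hu hv => -> [] ->; rewrite ?connect0 // connect_adj_sym.
Qed.

Lemma foldl_kruskal_sub (t : seq {set V}) F0 :
  foldl kruskal_step F0 t \subset F0 :|: [set f | f \in t].
Proof.
elim: t F0 => [|g t IH] F0 /=; first exact: subsetUl.
apply: subset_trans (IH _) _; apply/subsetP => h /setUP [/(subsetP (kruskal_step_sub F0 g))|].
  by rewrite !inE => /orP [] ->; rewrite ?orbT.
by rewrite !inE => ->; rewrite !orbT.
Qed.

Lemma foldl_kruskal_mono (t : seq {set V}) F0 : F0 \subset foldl kruskal_step F0 t.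
Proof.
elim: t F0 => [|g t IH] F0 //=.
exact: subset_trans (kruskal_step_mono F0 g) (IH _).
Qed.

Lemma connect_foldl_kruskal (t : seq {set V}) F0 f u v :
  {in t, forall g : {set V}, #|g| = 2} -> f \in t -> u \in f -> v \in f ->
  connect (adj (foldl kruskal_step F0 t)) u v.
Proof.
elim: t F0 => [|g t IH] F0 //= t2; rewrite inE => /orP [/eqP ->|ft] uf vf.
  apply: (connect_adj_subset (foldl_kruskal_mono _ _)).
  by apply: connect_kruskal_step; rewrite ?t2 ?mem_head.
by apply: IH => // h ht; apply: t2; rewrite inE ht orbT.
Qed.

Lemma forestlike_foldl_kruskal (t : seq {set V}) F0 :
  {in t, forall g : {set V}, #|g| = 2} -> set0 \notin F0 -> forestlike F0 ->
  forestlike (foldl kruskal_step F0 t).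
Proof.
elim: t F0 => [|g t IH] F0 //= t2 set0_notin forestF0.
have g2 : #|g| = 2 by rewrite t2 ?mem_head.
apply: IH; first by move=> h ht; apply: t2; rewrite inE ht orbT.
  apply: contraNN set0_notin => /(subsetP (kruskal_step_sub F0 g)) /setU1P [g0|//].
  by move: g2; rewrite -g0 cards0.
exact: forestlike_kruskal_step.
Qed.

Lemma kruskal_cat (s1 s2 : seq {set V}) :
  kruskal (s1 ++ s2) = foldl kruskal_step (kruskal s1) s2.
Proof. exact: foldl_cat. Qed.

Lemma kruskal_sub (t : seq {set V}) : kruskal t \subset [set f | f \in t].
Proof. by have := foldl_kruskal_sub t set0; rewrite set0U. Qed.

Lemma kruskal_take_sub (t : seq {set V}) r : kruskal (take r t) \subset kruskal t.
Proof. by rewrite -{2}(cat_take_drop r t) kruskal_cat foldl_kruskal_mono. Qed.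

Lemma mem_kruskal_take (t : seq {set V}) r f : uniq t -> f \in take r t ->
  (f \in kruskal t) = (f \in kruskal (take r t)).
Proof.
move=> uniq_t ft; apply/idP/idP; last exact/subsetP/kruskal_take_sub.
rewrite -{1}(cat_take_drop r t) kruskal_cat.
case/(subsetP (foldl_kruskal_sub _ _))/setUP => // /[!inE] fd.
by move: uniq_t; rewrite -(cat_take_drop r t) cat_uniq => /and3P [_ /hasPn /(_ f fd) /[!ft]].
Qed.

Lemma forestlike_kruskal (t : seq {set V}) :
  {in t, forall g : {set V}, #|g| = 2} -> forestlike (kruskal t).
Proof. by move=> t2; apply: forestlike_foldl_kruskal t2 _ forestlike0; rewrite in_set0. Qed.

Lemma card_verts_induced_components F G S : F \subset G -> forestlike F ->
  (forall g u v, g \in G -> u \in g -> v \in g -> connect (adj F) u v) ->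
  S \in components G -> #|verts (induced F S)| <= #|induced F S|.+1.
Proof.
move=> sFG forestF spanF /imsetP [u _ ->].
have GF : subrel (connect (adj G)) (connect (adj F)).
  by apply: connect_sub => v w /andP [_ vwG]; apply: spanF vwG _ _; rewrite !inE eqxx ?orbT.
have sub_verts : verts (induced F [set v in verts G | connect (adj G) u v]) \subset component F u.
  apply/subsetP => v /bigcupP [f /[!inE] /andP [_ /subsetP fS] vf].
  by move: (fS v vf); rewrite !inE => /andP [_ /GF].
have sub_edges : induced F (component F u) \subset
    induced F [set v in verts G | connect (adj G) u v].
  apply/subsetP => f /[!inE] /andP [fF /subsetP fC]; rewrite fF /=.
  apply/subsetP => v vf; rewrite inE (mem_edge_verts (subsetP sFG f fF) vf) /=.
  by apply: (connect_adj_subset sFG); move: (fC v vf); rewrite inE.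
apply: leq_trans (subset_leq_card sub_verts) _; apply: leq_trans (forestF u) _.
by rewrite ltnS subset_leq_card.
Qed.

Section Restrict.
Variables (M T Q : {set {set V}}).
Hypothesis T_leaf : forall f, f \in M -> f \notin T -> exists2 i, i \in f & degree M i = 1.
Hypothesis sQM : Q \subset M.
Let QT := [set f in Q | f \in T].

Lemma card_restrict_leaves : #|Q :\: QT| <= #|verts Q :\: verts QT|.
Proof.
pose edge_at i := odflt set0 [pick f in M | i \in f].
have edge_atE i f : degree M i = 1 -> f \in M -> i \in f -> edge_at i = f.
  move=> /eqP/cards1P [g defg] fM fi.
  have at_g h : h \in M -> i \in h -> h = g by move=> hM hi; apply/set1P; rewrite -defg inE hM hi.
  rewrite /edge_at; case: pickP => [h /andP [hM hi]|/(_ f)]; last by rewrite fM fi.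
  by rewrite (at_g h hM hi) (at_g f fM fi).
apply: leq_trans (leq_imset_card edge_at _); apply/subset_leq_card/subsetP => f.
rewrite !inE negb_and => /andP [/orP [fQ|fT] fQ']; first by rewrite fQ' in fQ.
have fM := subsetP sQM f fQ'; have [i fi degi] := T_leaf fM fT.
apply/imsetP; exists i; last by rewrite (edge_atE i f).
rewrite !inE (mem_edge_verts fQ' fi) andbT; apply/bigcupP => -[g /[!inE] /andP [gQ gT] gi].
have gM := subsetP sQM g gQ.
by move: fT; rewrite -(edge_atE i f degi fM fi) (edge_atE i g degi gM gi) gT.
Qed.

Lemma card_verts_restrict : #|verts Q| <= #|Q|.+1 -> #|verts QT| <= #|QT|.+1.
Proof.
have sub_QT : QT \subset Q by apply/subsetP => f /[!inE] /andP [].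
have sub_verts : verts QT \subset verts Q.
  by apply/bigcupsP => f fQT; apply/bigcup_sup/(subsetP sub_QT).
have := card_restrict_leaves; rewrite (cardsD Q QT) (cardsD (verts Q) (verts QT)).
rewrite (setIidPr sub_QT) (setIidPr sub_verts).
have := subset_leq_card sub_QT; have := subset_leq_card sub_verts; lia.
Qed.

End Restrict.

Section KruskalPrefix.
Variables (s : seq {set V}) (r : nat) (T : {set {set V}}).
Hypotheses (uniq_s : uniq s) (s_edges : {in s, forall g : {set V}, #|g| = 2}).
Hypotheses (T_sub : T \subset kruskal s)
  (T_leaf : forall f, f \in kruskal s -> f \notin T -> exists2 i, i \in f & degree (kruskal s) i = 1).
Let EH := [set e | e \in take r s].
Let F := kruskal (take r s).

Lemma tree_part_kruskal_take S : tree_part T EH S = [set f in induced F S | f \in T].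
Proof.
apply/setP => f; rewrite !inE andbAC; case fT: (f \in T); rewrite ?andbF //= !andbT.
congr (_ && _); apply/idP/idP => [fEH|/(subsetP (kruskal_sub _))]; last by rewrite inE.
by rewrite /F -mem_kruskal_take // (subsetP T_sub).
Qed.

Lemma card_verts_tree_part S : S \in components EH ->
  #|verts (tree_part T EH S)| <= #|tree_part T EH S|.+1.
Proof.
have take_edges : {in take r s, forall g : {set V}, #|g| = 2}.
  by move=> g /mem_take; apply: s_edges.
have span g u v : g \in EH -> u \in g -> v \in g -> connect (adj F) u v.
  by rewrite inE; apply: connect_foldl_kruskal.
move=> SC; rewrite tree_part_kruskal_take; apply: card_verts_restrict T_leaf _ _.
  apply: subset_trans (kruskal_take_sub s r).
  by apply/subsetP => f /[!inE] /andP [].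
exact: card_verts_induced_components (kruskal_sub _) (forestlike_kruskal take_edges) span SC.
Qed.

End KruskalPrefix.

End Graphs.

Local Open Scope ring_scope.

Lemma prune_sub (R : realType) (V : finType) (x : V -> R) (M : {set {set V}}) :
  prune x M \subset M.
Proof. by apply/subsetP => f /[!inE] /andP []. Qed.

Lemma prune_leaf (R : realType) (V : finType) (x : V -> R) (M : {set {set V}}) f :
  f \in M -> f \notin prune x M -> exists2 i, i \in f & degree M i = 1%N.
Proof.
move=> fM; rewrite inE fM => /forallPn [i].
by rewrite negb_imply negbK => /andP [fi /andP [/eqP degi _]]; exists i.
Qed.

Lemma lp_feasible_induced (R : realType) (V : finType) (E F : {set {set V}})
    (x : V -> R) (y : {set V} -> R) (S : {set V}) :
  lp_feasible E x y -> F \subset E -> induced F S != set0 ->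
  1 <= \sum_(i in S) x i - \sum_(e in induced F S) y e.
Proof.
case=> _ cover_ineq _ y_bound sFE neqF.
have sub_ind : induced F S \subset induced E S.
  by apply/subsetP => f /[!inE] /andP [/(subsetP sFE) -> ->].
have neqE : induced E S != set0 by apply: contraNneq neqF => eq0; rewrite -subset0 -eq0.
apply: le_trans (cover_ineq S neqE) _; rewrite lerD2l lerN2.
rewrite [leRHS](big_setID (induced F S)) /= (setIidPr sub_ind) lerDl.
by apply: sumr_ge0 => e /[!inE] /andP [_ /andP [eE _]]; case/andP: (y_bound e eE).
Qed.

Theorem lemma6p3 (R : realType) (V : finType) (E : {set {set V}})
  (w : {set V} -> R) (x : V -> R) (y : {set V} -> R)
  (VC : {set V}) (s : seq {set V}) (r : nat) :
  simple_graph E ->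
  (forall e, e \in E -> 0 <= w e <= 1) ->
  lp_optimal E w x y ->
  is_component (Gstar_edges E y) (Gstar_verts x) VC ->
  induced (Gstar_edges E y) VC != set0 ->
  perm_eq s (enum (induced (Gstar_edges E y) VC)) ->
  sorted (fun a b => w a <= w b) s ->
  (1 <= r <= size s)%N ->
  let M := kruskal s in
  let T := prune x M in
  let EH := [set e | e \in take r s] in
  \sum_(S in components EH)
      ((#|verts (tree_part T EH S)|)%:R - (#|tree_part T EH S|)%:R)
  <= \sum_(i in verts EH) x i - \sum_(e in EH) y e.
Proof.
move=> simpleE _ [feasE _] _ _ perm_s _ _; cbv zeta; set EH := [set e | e \in take r s].
have s_E : {subset s <= E}.
  by move=> f; rewrite (perm_mem perm_s) mem_enum !inE => /andP [/andP []].
have uniq_s : uniq s by rewrite (perm_uniq perm_s) enum_uniq.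
have EH_E : EH \subset E by apply/subsetP => f /[!inE] /mem_take /s_E.
have simpleEH : simple_graph EH by move=> f /(subsetP EH_E) /simpleE.
apply: (@le_trans _ _ (\sum_(S in components EH)
    (\sum_(i in S) x i - \sum_(e in induced EH S) y e))); last first.
  by rewrite sumrB sum_verts_components (sum_edges_components _ simpleEH).
apply: ler_sum => S SC.
have := lp_feasible_induced feasE EH_E (induced_components_neq0 simpleEH SC).
have := card_verts_tree_part uniq_s (fun g gs => simpleE g (s_E g gs))
  (prune_sub x _) (@prune_leaf _ _ x _) SC.
rewrite -(ler_nat R) -natr1; lra.
Qed.
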